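(* Let $m>2$ and $n>0$ be odd integers. Then $\mathcal{C}_m^n=\mathbf{Z}_m^n$.
   Context: $\mathbf{Z}_m$ denotes the integers modulo $m$. $T:\mathbf{Z}_m^n\to\mathbf{Z}_m^n$ is $T(a_0,\dots,a_{n-1})=(a_0+a_1,a_1+a_2,\dots,a_{n-1}+a_0)$. $\mathcal{C}_m^n$ is the set of tuples lying in a cycle of some sequence $(T^k\mathbf{b})_{k\ge0}$, i.e. the set of $\mathbf{a}\in\mathbf{Z}_m^n$ such that $T^P\mathbf{a}=\mathbf{a}$ for some positive integer $P$. *)

From mathcomp Require Import all_boot all_order all_algebra.
Set Implicit Arguments. Unset Strict Implicit. Unset Printing Implicit Defensive.
Import GRing.Theory.
Local Open Scope ring_scope.

(* Tuples in Z_m^n are finite functions 'I_n -> 'Z_m (used only with 1 < m). *)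
Definition ducci (m n : nat) (a : {ffun 'I_n -> 'Z_m}) : {ffun 'I_n -> 'Z_m} :=
  [ffun i => a i + a (ordS i)].

Definition in_cycle (m n : nat) (a : {ffun 'I_n -> 'Z_m}) : Prop :=
  exists P : nat, (0 < P)%N /\ iter P (@ducci m n) a = a.

From mathcomp Require Import all_boot all_order all_algebra.

Set Implicit Arguments.
Unset Strict Implicit.
Unset Printing Implicit Defensive.
Import GRing.Theory.
Local Open Scope ring_scope.

(* If T a = 0 then a_{i+1} = -a_i, so going once around the odd cycle of
   indices gives a_i = -a_i; as 2 is invertible modulo the odd m, a = 0.
   Since T is additive it is therefore injective, hence a permutation of
   the finite set Z_m^n, and every tuple lies on a cycle. *)

Section AntiInvariant.

Variables (T : Type) (V : zmodType) (f : T -> T) (d : T -> V).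
Hypothesis dfN : forall x, d (f x) = - d x.

Lemma iter_antiinvariant k x : d (iter k f x) = if odd k then - d x else d x.
Proof. by elim: k => [|k IHk] //=; rewrite dfN IHk; case: (odd k); rewrite ?opprK. Qed.

Lemma antiinvariant_odd_period k x :
  odd k -> iter k f x = x -> d x *+ 2 = 0.
Proof.
move=> k_odd fkx; have := iter_antiinvariant k x.
by rewrite fkx k_odd mulr2n => /eqP; rewrite -subr_eq0 opprK => /eqP.
Qed.

End AntiInvariant.

Lemma iter_ordS n (i : 'I_n) k : val (iter k (@ordS n) i) = ((i + k) %% n)%N.
Proof.
elim: k => [|k IHk] /=; first by rewrite addn0 modn_small.
by rewrite IHk -[(_ %% n).+1]addn1 modnDml addn1 addnS.
Qed.

Lemma iter_ordS_period n (i : 'I_n) : iter n (@ordS n) i = i.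
Proof. by apply: val_inj; rewrite iter_ordS modnDr modn_small. Qed.

Lemma Zp_double_eq0 m (x : 'Z_m) : (1 < m)%N -> odd m -> x *+ 2 = 0 -> x = 0.
Proof.
move=> m_gt1 m_odd x2_eq0.
have two_unit : (2%:R : 'Z_m) \is a GRing.unit by rewrite unitZpE // coprimen2.
by apply: (mulrI two_unit); rewrite mulr_natl x2_eq0 mulr0.
Qed.

Lemma ducciB m n : zmod_morphism (@ducci m n).
Proof.
by move=> a b; apply/ffunP => i; rewrite !ffunE opprD addrACA.
Qed.

Lemma ducci_eq0 m n (a : {ffun 'I_n -> 'Z_m}) :
  (1 < m)%N -> odd m -> odd n -> ducci a = 0 -> a = 0.
Proof.
move=> m_gt1 m_odd n_odd Ta0; apply/ffunP => i; rewrite ffunE.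
have aSN j : a (ordS j) = - a j.
  move/ffunP/(_ j): Ta0; rewrite !ffunE => /eqP.
  by rewrite addrC addr_eq0 => /eqP.
apply: Zp_double_eq0 => //.
exact: (antiinvariant_odd_period aSN n_odd (iter_ordS_period i)).
Qed.

Lemma ducci_inj m n : (1 < m)%N -> odd m -> odd n -> injective (@ducci m n).
Proof.
move=> m_gt1 m_odd n_odd a b Tab; apply/eqP; rewrite -subr_eq0; apply/eqP.
by apply: ducci_eq0 => //; rewrite ducciB Tab subrr.
Qed.

Theorem proposition6p1 (m n : nat) (hm : (2 < m)%N) (hmodd : odd m)
  (hn : (0 < n)%N) (hnodd : odd n) :
  forall a : {ffun 'I_n -> 'Z_m}, in_cycle a.
Proof.
move=> a; have Tinj := ducci_inj (ltnW hm) hmodd hnodd.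
exists (order (@ducci m n) a); split; first exact: order_gt0.
exact: iter_order Tinj a.
Qed.
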